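(* Let $\beta\ge2$ and let $T\ge\beta$ be an even integer. Define the two LDSs on $\mathbb{R}$ (state and control in $\mathbb{R}$) $\mathcal{L}^0:=(1,-\beta/T,x_1,(w_t^0)_t,(c_t)_t)$ and $\mathcal{L}^1:=(1,-\beta/T,x_1,(w_t^1)_t,(c_t)_t)$, i.e. with dynamics $x_{t+1}=x_t-\frac\beta Tu_t+w_t^b$ for $b\in\{0,1\}$, where $x_1=1$, $c_t(x,u):=|x|+|u|$ if $t>T/2$ and $c_t(x,u):=0$ otherwise, $w_t^0:=0$ for all $t$, and $w_t^1:=-1$ if $t=T/2$ and $w_t^1:=0$ otherwise. Define $\pi^0(x):=x$ and $\pi^1(x):=0$. Then: (i) $\pi^0\in\mathcal{K}_1(\mathcal{L}^0)$, and the iterates $(x_t,u_t)_{t=1}^T$ produced by following $\pi^0$ in $\mathcal{L}^0$ satisfy $\sum_{t=1}^Tc_t(x_t,u_t)\le\frac{2T}{\beta}e^{-\beta/2}$; (ii) $\pi^1\in\mathcal{K}_1(\mathcal{L}^1)$, and the iterates produced by following $\pi^1$ in $\mathcal{L}^1$ satisfy $\sum_{t=1}^Tc_t(x_t,u_t)=0$.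
   Context: An LDS $(A,B,x_1,(w_t),(c_t))$ evolves as $x_{t+1}=Ax_t+Bu_t+w_t$ with cost $c_t(x_t,u_t)$ at time $t$. A matrix $M$ is $\kappa$-marginally stable if there is $H$ with $\|H^{-1}MH\|\le1$ and $\|M\|,\|H\|,\|H^{-1}\|\le\kappa$. $\mathcal{K}_\kappa(\mathcal{L})$ is the set of linear time-invariant policies $x\mapsto Kx$ such that $A+BK$ is $\kappa$-marginally stable. *)

From Stdlib Require Import Reals Lra Lia.
Open Scope R_scope.

(* An LDS (A,B,x_1,(w_t),(c_t)) with state and control in R.
   Times are indexed by nat starting at 1. *)
Record LDS := mkLDS {
  lds_A : R;
  lds_B : R;
  lds_x1 : R;
  lds_w : nat -> R;
  lds_c : nat -> R -> R -> R
}.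

(* kappa-marginal stability of a 1x1 matrix M (operator norm = absolute value):
   there is an invertible H with |H^-1 M H| <= 1 and |M|,|H|,|H^-1| <= kappa. *)
Definition marginally_stable (kappa M : R) : Prop :=
  exists H : R, H <> 0 /\ Rabs (/ H * M * H) <= 1 /\
    Rabs M <= kappa /\ Rabs H <= kappa /\ Rabs (/ H) <= kappa.

Definition in_Kkappa (kappa : R) (L : LDS) (pi : R -> R) : Prop :=
  exists K : R, (forall x, pi x = K * x) /\
    marginally_stable kappa (lds_A L + lds_B L * K).

(* traj L pi n = x_{n+1}: the state at time n+1 when following pi in L,
   with u_t = pi x_t and x_{t+1} = A x_t + B u_t + w_t. *)
Fixpoint traj (L : LDS) (pi : R -> R) (n : nat) : R :=
  match n with
  | O => lds_x1 L
  | S m => let x := traj L pi m in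
           lds_A L * x + lds_B L * pi x + lds_w L (S m)
  end.

Definition state (L : LDS) (pi : R -> R) (t : nat) : R := traj L pi (t - 1).

Fixpoint total_cost (L : LDS) (pi : R -> R) (n : nat) : R :=
  match n with
  | O => 0
  | S m => total_cost L pi m +
           lds_c L (S m) (state L pi (S m)) (pi (state L pi (S m)))
  end.

Definition cost_T (T : nat) (t : nat) (x u : R) : R :=
  if Nat.ltb (Nat.div T 2) t then Rabs x + Rabs u else 0.

Definition w0 (t : nat) : R := 0.
Definition w1 (T : nat) (t : nat) : R := if Nat.eqb t (Nat.div T 2) then -1 else 0.

Definition L0 (beta : R) (T : nat) : LDS :=
  mkLDS 1 (- (beta / INR T)) 1 w0 (cost_T T).
Definition L1 (beta : R) (T : nat) : LDS :=
  mkLDS 1 (- (beta / INR T)) 1 (w1 T) (cost_T T).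

Definition pi0 (x : R) : R := x.
Definition pi1 (x : R) : R := 0.

(* Under pi0 the closed loop is x |-> (1 - beta/T) x, so x_t = (1 - beta/T)^(t-1)
   and the cost counted after T/2 is a geometric tail, at most
   2 (1 - beta/T)^(T/2) / (beta/T) <= (2T/beta) e^(-beta/2) since 1 - p <= e^(-p).
   Under pi1 the state stays 1 until the disturbance -1 at time T/2 cancels it, and
   stays 0 afterwards, so no cost is ever paid.  Both closed-loop gains lie in
   [-1, 1], so H = 1 witnesses 1-marginal stability. *)
From Stdlib Require Import Reals Lra Lia.
Open Scope R_scope.

Lemma marginally_stable_1 (M : R) : Rabs M <= 1 -> marginally_stable 1 M.
Proof.
  intros HM. exists 1.
  rewrite Rinv_1, Rmult_1_l, Rmult_1_r, Rabs_R1.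
  repeat split; lra.
Qed.

Lemma in_Kkappa_1_linear (L : LDS) (pi : R -> R) (K : R) :
  (forall x, pi x = K * x) -> Rabs (lds_A L + lds_B L * K) <= 1 ->
  in_Kkappa 1 L pi.
Proof.
  intros HK Hgain. exists K. split; [exact HK|].
  exact (marginally_stable_1 _ Hgain).
Qed.

Lemma state_S (L : LDS) (pi : R -> R) (n : nat) : state L pi (S n) = traj L pi n.
Proof. unfold state. f_equal. lia. Qed.

Lemma pow_one_sub_le_exp (x : R) (n : nat) :
  0 <= x <= 1 -> (1 - x) ^ n <= exp (- (INR n * x)).
Proof.
  intros Hx.
  assert (Hexp_pow : exp (- x) ^ n = exp (- (INR n * x))).
  { rewrite <- Rpower_pow by apply exp_pos. unfold Rpower.
    rewrite ln_exp. f_equal. ring. }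
  rewrite <- Hexp_pow. apply pow_incr.
  pose proof (exp_ineq1_le (- x)). lra.
Qed.

Lemma Rdiv_in_01 (a b : R) : 0 < a <= b -> 0 < a / b <= 1.
Proof.
  intros Hab. split; [apply Rdiv_lt_0_compat; lra|].
  apply (Rmult_le_reg_r b); [lra|].
  unfold Rdiv. rewrite Rmult_assoc, Rinv_l by lra. lra.
Qed.

Lemma traj_L0_pi0 (beta : R) (T n : nat) :
  traj (L0 beta T) pi0 n = (1 - beta / INR T) ^ n.
Proof.
  induction n as [|n IH]; [reflexivity|].
  simpl. rewrite IH. unfold pi0, w0. ring.
Qed.

Lemma total_cost_L0_pi0 (beta : R) (T n : nat) :
  0 < beta <= INR T ->
  total_cost (L0 beta T) pi0 n =
  2 * ((1 - beta / INR T) ^ (T / 2) - (1 - beta / INR T) ^ Nat.max n (T / 2))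
    / (beta / INR T).
Proof.
  intros Hbeta.
  pose proof (Rdiv_in_01 _ _ Hbeta) as Hp.
  induction n as [|n IH]; simpl total_cost.
  - rewrite Nat.max_0_l. field. lra.
  - rewrite IH, state_S, traj_L0_pi0.
    simpl lds_c. unfold cost_T, pi0.
    set (p := beta / INR T) in *.
    destruct (Nat.ltb_spec (T / 2) (S n)).
    + assert (0 <= (1 - p) ^ n) by (apply pow_le; lra).
      rewrite Rabs_right by lra. rewrite !Nat.max_l by lia.
      simpl. field. lra.
    + rewrite !Nat.max_r by lia. field. lra.
Qed.

Lemma total_cost_L0_pi0_le (beta : R) (T n : nat) :
  0 < beta <= INR T ->
  total_cost (L0 beta T) pi0 n <= 2 * INR T / beta * (1 - beta / INR T) ^ (T / 2).
Proof.
  intros Hbeta. rewrite total_cost_L0_pi0 by exact Hbeta.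
  pose proof (Rdiv_in_01 _ _ Hbeta) as Hp.
  assert (Htail : 0 <= (1 - beta / INR T) ^ Nat.max n (T / 2)).
  { apply pow_le. lra. }
  replace (2 * INR T / beta * (1 - beta / INR T) ^ (T / 2))
    with (2 * (1 - beta / INR T) ^ (T / 2) / (beta / INR T)) by (field; lra).
  apply Rmult_le_compat_r; [|lra].
  apply Rlt_le, Rinv_0_lt_compat, Rdiv_lt_0_compat; lra.
Qed.

Lemma traj_L1_pi1 (beta : R) (T n : nat) : (1 <= T / 2)%nat ->
  traj (L1 beta T) pi1 n = if Nat.ltb n (T / 2) then 1 else 0.
Proof.
  intros Hh. induction n as [|n IH].
  - rewrite (proj2 (Nat.ltb_lt 0 (T / 2))) by lia. reflexivity.
  - simpl traj. rewrite IH. simpl lds_A. simpl lds_B. simpl lds_w. unfold pi1, w1.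
    destruct (Nat.ltb_spec n (T / 2)), (Nat.ltb_spec (S n) (T / 2)),
      (Nat.eqb_spec (S n) (T / 2)); try lia; ring.
Qed.

Lemma total_cost_L1_pi1 (beta : R) (T n : nat) : (1 <= T / 2)%nat ->
  total_cost (L1 beta T) pi1 n = 0.
Proof.
  intros Hh. induction n as [|n IH]; [reflexivity|].
  simpl total_cost. rewrite IH, state_S, traj_L1_pi1 by exact Hh.
  simpl lds_c. unfold cost_T, pi1.
  destruct (Nat.ltb_spec (T / 2) (S n)), (Nat.ltb_spec n (T / 2)); try lia;
    rewrite ?Rabs_R0; ring.
Qed.

Theorem lemma10 (beta : R) (T : nat) :
  2 <= beta -> Nat.Even T -> beta <= INR T ->
  (in_Kkappa 1 (L0 beta T) pi0 /\
   total_cost (L0 beta T) pi0 T <= 2 * INR T / beta * exp (- beta / 2)) /\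
  (in_Kkappa 1 (L1 beta T) pi1 /\
   total_cost (L1 beta T) pi1 T = 0).
Proof.
  intros Hbeta [m ->] HbetaT.
  assert (Hhalf : (2 * m / 2 = m)%nat) by (rewrite Nat.mul_comm; apply Nat.div_mul; lia).
  assert (HT : INR (2 * m) = 2 * INR m) by (rewrite mult_INR; reflexivity).
  assert (Hm : (1 <= m)%nat) by (destruct m; [simpl in HbetaT; lra | lia]).
  assert (Hp : 0 < beta / INR (2 * m) <= 1) by (apply Rdiv_in_01; lra).
  split; split.
  - apply in_Kkappa_1_linear with 1; [intro; unfold pi0; ring|].
    cbn [L0 lds_A lds_B]. rewrite Rabs_right; lra.
  - eapply Rle_trans; [apply total_cost_L0_pi0_le; lra|].
    apply Rmult_le_compat_l.
    + apply Rmult_le_pos; [lra|]. apply Rlt_le, Rinv_0_lt_compat. lra.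
    + rewrite Hhalf.
      replace (- beta / 2) with (- (INR m * (beta / INR (2 * m)))) by (rewrite HT; field; lra).
      apply pow_one_sub_le_exp. lra.
  - apply in_Kkappa_1_linear with 0; [intro; unfold pi1; ring|].
    cbn [L1 lds_A lds_B]. rewrite Rmult_0_r, Rplus_0_r, Rabs_R1. lra.
  - apply total_cost_L1_pi1. lia.
Qed.
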